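(* Let $0<q<1$ and let $|0\rangle$ be the normalized infinite-volume kink ground state with renormalized total $S^3$ equal to $0$. For every integer $x>0$, $$\langle 0|S^3_x|0\rangle=-\tfrac12+q^{2x}\sum_{k=0}^\infty(-1)^kq^{k(k+2x+1)}.$$ For every integer $x\le0$, $\langle0|S^3_x|0\rangle=-\langle0|S^3_{1-x}|0\rangle$. Moreover, there exist constants $C,c>0$ depending only on $q$ such that $p(m):=\langle0|S^3_{m-1}-S^3_m|0\rangle$ satisfies $0\le p(m)\le Ce^{-c|m|}$ for all $m\in\mathbb Z$.
   Context: Fix $0<q<1$, related to the anisotropy by $q+q^{-1}=2\Delta$ with $\Delta>1$. Let $\Omega^{+-}=\bigotimes_{x\le0}|\!\uparrow\rangle\otimes\bigotimes_{x>0}|\!\downarrow\rangle$, and let $\mathcal H$ be the incomplete tensor product space generated from it. Define the grand-canonical vector $$\psi(z)=\prod_{x\le0}(1+z^{-1}q^{-x}S^-_x)\prod_{x\ge1}(1+zq^{x}S^+_x)\,\Omega^{+-}$$ for $z\neq0$. Expand it as $\psi(z)=\sum_{n\in\mathbb Z}\psi_nz^n$. Explicitly, $\psi_n$ is the sum, over finite sets $A\subset\{x\le0\}$ and $B\subset\{x\ge1\}$ with $|B|-|A|=n$, of $\prod_{x\in A}q^{|x|}\prod_{y\in B}q^{y}$ times the vector obtained from $\Omega^{+-}$ by flipping the spins in $A\cup B$. The vector $\psi_n$ has renormalized total $S^3$ equal to $n$. The kink ground states are $|n\rangle=\psi_n/\|\psi_n\|$, $n\in\mathbb Z$. *)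

From HB Require Import structures.
From mathcomp Require Import all_boot all_order all_algebra.
From mathcomp Require Import finmap.
From mathcomp Require Import all_classical all_reals all_analysis.
Set Implicit Arguments. Unset Strict Implicit. Unset Printing Implicit Defensive.
Import Order.TTheory GRing.Theory Num.Theory numFieldNormedType.Exports.
Local Open Scope ring_scope.
Local Open Scope classical_set_scope.

(* A basis vector of the incomplete tensor product space generated from
   Omega^{+-} is determined by the finite set of flipped sites; we split it as
   (A, B) with A the flipped sites x <= 0 and B the flipped sites x >= 1. *)
Definition config := ({fset int} * {fset int})%type.

Definition kink_configs (n : int) : set config :=
  [set c | (forall a, a \in c.1 -> a <= 0) /\ (forall b, b \in c.2 -> 0 < b)
           /\ ((#|` c.2|%fset)%:Z - (#|` c.1|%fset)%:Z = n)].

(* Coefficient of the basis vector c in psi_n :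
   prod_{x in A} q^{|x|} prod_{y in B} q^{y}. *)
Definition weight {R : realType} (q : R) (c : config) : R :=
  q ^+ ((\sum_(a <- c.1) absz a) + (\sum_(b <- c.2) absz b))%N.

Definition spin_up (x : int) (c : config) : bool :=
  if x <= 0 then x \notin c.1 else x \in c.2.

(* <n| S^3_x |n> with |n> = psi_n / ||psi_n||, computed in the orthonormal
   product basis: (sum_c w(c)^2 s_x(c)) / (sum_c w(c)^2). *)
Definition kink_expect {R : realType} (q : R) (n : int) (x : int) : R :=
  let Z := esum (kink_configs n) (fun c => ((weight q c) ^+ 2)%:E) in
  let Up := esum (kink_configs n `&` [set c | spin_up x c])
                 (fun c => ((weight q c) ^+ 2)%:E) in
  let Down := esum (kink_configs n `&` [set c | ~~ spin_up x c])
                 (fun c => ((weight q c) ^+ 2)%:E) in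
  (2^-1 * fine Up - 2^-1 * fine Down) / fine Z.

From HB Require Import structures.
From mathcomp Require Import all_boot all_order all_algebra.
From mathcomp Require Import finmap.
From mathcomp Require Import all_classical all_reals all_analysis.
From mathcomp Require Import zify lra.
Import Order.TTheory GRing.Theory Num.Theory numFieldNormedType.Exports.
Set Implicit Arguments. Unset Strict Implicit. Unset Printing Implicit Defensive.
Local Open Scope ring_scope.

(** Write [Z n] for the squared norm of [psi_n] and [H n x] for
    the part of it carried by configurations in which the spin at [x] is
    flipped.  Flipping the spin at a site [x >= 1] multiplies the squared
    weight by [q^(2x)] and raises the charge by one, so
    [H n x = q^(2x) (Z (n-1) - H (n-1) x)]; shifting every flipped site one
    step to the left gives [Z (-k-1) = q^(2k) Z (-k)], hence
    [Z (-k) = q^(k(k-1)) Z 0].  Iterating the first identity expresses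
    [H 0 x / Z 0] as the alternating theta-like series of the statement, with
    an error at most [q^(2N)] after [N] terms, and all these sums are finite
    because [Z n <= 2 exp(2 q^2 / (1 - q^2))].  The reflection [x |-> 1 - x]
    exchanges flipped sites left and right of the kink and preserves weights
    in the charge-0 sector, which gives the antisymmetry.  Finally
    [p(m) >= 0] is monotonicity of [x |-> H 0 x] on each side of the kink,
    obtained by comparing configurations flipped at exactly one of two
    neighbouring sites (at the kink itself: flipped at both [0] and [1] versus
    at neither), and [p(m) <= q^(2|m-1|)] follows from [H 0 x <= q^(2x) Z 0]. *)

Lemma ge0_esumZl {R : realType} (T : choiceType) (S : set T) (f : T -> \bar R) (r : R) :
  0 <= r -> (forall x, (0 <= f x)%E) ->
  esum S (fun x => r%:E * f x)%E = (r%:E * esum S f)%E.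
Proof.
move=> r0 f0; rewrite /esum -ereal_supZl //; last first.
  by apply/set0P; exists (\sum_(x \in set0) f x)%E; exists set0 => //; exact: fsets_set0.
congr ereal_sup; apply/seteqP; split => y /=.
- case=> A hA <-; exists (\sum_(x \in A) f x)%E; first by exists A.
  by rewrite ge0_mule_fsumr.
- by case=> _ [A hA <-] <-; exists A => //; rewrite ge0_mule_fsumr.
Qed.

Lemma subset_le_esum {R : realType} (T : choiceType) (S S' : set T) (f : T -> \bar R) :
  (S `<=` S')%classic -> (esum S f <= esum S' f)%E.
Proof.
move=> SS; apply: ge_ereal_sup => _ [A [finA AS] <-]; apply: ereal_sup_ubound.
by exists A => //; split => //; exact: subset_trans AS SS.
Qed.

Lemma mem_imfset_can (K : choiceType) (f g : K -> K) (A : {fset K}) y :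
  injective f -> cancel g f -> (y \in [fset f x | x in A]%fset) = (g y \in A).
Proof. by move=> injf gK; rewrite -{1}(gK y) (mem_imfset _ _ injf). Qed.

Lemma geom_sum_le {R : realFieldType} (p : R) N :
  0 <= p < 1 -> \sum_(j < N) p ^+ j.+1 <= p / (1 - p).
Proof.
move=> /andP[p0 p1]; rewrite ler_pdivlMr ?subr_gt0 //.
under eq_bigr do rewrite exprS.
rewrite -mulr_sumr -mulrA ler_piMr //.
have -> : (\sum_(i < N) p ^+ i) * (1 - p) = 1 - p ^+ N.
  by rewrite mulrC -opprB mulNr -subrX1 opprB.
by rewrite lerBlDr lerDl exprn_ge0.
Qed.

Lemma cvg_geometric_rate {R : realType} (u : R ^nat) (L r K : R) :
  0 <= r < 1 -> 0 <= K ->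
  (forall N, `|L - u N| <= K * r ^+ N) -> (u @ \oo --> L)%classic.
Proof.
move=> /andP[r0 r1] K0 hb; apply/cvgrPdist_le => e e0.
have eK : 0 < e / (K + 1) by rewrite divr_gt0 // ltr_pwDr.
have /cvgrPdist_le /(_ _ eK) : (r ^+ n @[n --> \oo] --> 0)%classic.
  by apply: cvg_expr; rewrite ger0_norm.
apply: filterS => N; rewrite sub0r normrN ger0_norm ?exprn_ge0 // => hN.
apply: le_trans (hb N) (le_trans (ler_wpM2l K0 hN) _).
rewrite mulrA ler_pdivrMr ?ltr_pwDr //; nra.
Qed.

Definition flipped (x : int) (c : config) : bool :=
  if x <= 0 then x \in c.1 else x \in c.2.

Definition add_flip (x : int) (c : config) : config :=
  if x <= 0 then ((x |` c.1)%fset, c.2) else (c.1, (x |` c.2)%fset).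

Definition del_flip (x : int) (c : config) : config :=
  if x <= 0 then ((c.1 `\ x)%fset, c.2) else (c.1, (c.2 `\ x)%fset).

Definition charge (c : config) : int := (#|` c.2|%fset)%:Z - (#|` c.1|%fset)%:Z.

Definition flip_charge (x : int) : int := if x <= 0 then -1 else 1.

Definition admissible (c : config) :=
  (forall a, a \in c.1 -> a <= 0) /\ (forall b, b \in c.2 -> 0 < b).

(* [weight q c = q ^+ config_deg c] by conversion. *)
Definition config_deg (c : config) : nat :=
  (\sum_(a <- c.1) absz a + \sum_(b <- c.2) absz b)%N.

Lemma flipped_add x c : flipped x (add_flip x c).
Proof. by rewrite /flipped /add_flip; case: (x <= 0) => /=; exact: fset1U1. Qed.

Lemma flipped_add_neq x y c : y != x -> flipped y (add_flip x c) = flipped y c.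
Proof.
move=> yx; rewrite /flipped /add_flip; case: (x <= 0); case: (y <= 0) => //=;
by rewrite in_fset1U (negbTE yx).
Qed.

Lemma flipped_del x c : ~~ flipped x (del_flip x c).
Proof. by rewrite /flipped /del_flip; case: (x <= 0) => /=; rewrite in_fsetD1 eqxx. Qed.

Lemma flipped_del_neq x y c : y != x -> flipped y (del_flip x c) = flipped y c.
Proof.
move=> yx; rewrite /flipped /del_flip; case: (x <= 0); case: (y <= 0) => //=;
by rewrite in_fsetD1 yx.
Qed.

Lemma add_delK x c : flipped x c -> add_flip x (del_flip x c) = c.
Proof.
by case: c => A B; rewrite /flipped /add_flip /del_flip; case: (x <= 0) => /= h;
  rewrite fsetD1K.
Qed.

Lemma del_addK x c : ~~ flipped x c -> del_flip x (add_flip x c) = c.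
Proof.
by case: c => A B; rewrite /flipped /add_flip /del_flip; case: (x <= 0) => /= h;
  rewrite fsetU1K.
Qed.

Lemma config_deg_add x c :
  ~~ flipped x c -> config_deg (add_flip x c) = (absz x + config_deg c)%N.
Proof.
case: c => A B; rewrite /flipped /add_flip /config_deg.
case: (x <= 0) => /= h; rewrite big_fsetU1 //=; first by rewrite addnA.
by rewrite addnCA.
Qed.

Lemma charge_add x c : ~~ flipped x c -> charge (add_flip x c) = charge c + flip_charge x.
Proof.
case: c => A B; rewrite /flipped /add_flip /charge /flip_charge.
by case: (x <= 0) => /= h; rewrite cardfsU1 h /=; lia.
Qed.

Lemma charge_del x c : flipped x c -> charge (del_flip x c) = charge c - flip_charge x.
Proof.
move=> h; have := charge_add (flipped_del x c); rewrite add_delK // => ->; lia.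
Qed.

Lemma admissible_add x c : admissible c -> admissible (add_flip x c).
Proof.
case: c => A B [h1 h2]; rewrite /add_flip; case: ifP => hx; split => /= y.
- by case/fset1UP => [->|/h1].
- exact: h2.
- exact: h1.
- by case/fset1UP => [->|/h2]//; rewrite ltNge hx.
Qed.

Lemma admissible_del x c : admissible c -> admissible (del_flip x c).
Proof.
case: c => A B [h1 h2]; rewrite /del_flip; case: ifP => hx; split => /= y.
- by case/fsetD1P => _; apply: h1.
- exact: h2.
- exact: h1.
- by case/fsetD1P => _; apply: h2.
Qed.

Lemma kink_configs_admissible n c : kink_configs n c -> admissible c.
Proof. by case=> [h1 [h2 _]]. Qed.

Lemma kink_configs_charge n c : kink_configs n c -> charge c = n.
Proof. by case=> [_ [_ h]]. Qed.

Lemma kink_configsI n c : admissible c -> charge c = n -> kink_configs n c.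
Proof. by case=> h1 h2 h3; split=> //; split. Qed.

Lemma kink_configs_add x n c : kink_configs n c -> ~~ flipped x c ->
  kink_configs (n + flip_charge x) (add_flip x c).
Proof.
move=> Kc h; apply: kink_configsI; first exact/admissible_add/kink_configs_admissible/Kc.
by rewrite charge_add // (kink_configs_charge Kc).
Qed.

Lemma kink_configs_del x n c : kink_configs n c -> flipped x c ->
  kink_configs (n - flip_charge x) (del_flip x c).
Proof.
move=> Kc h; apply: kink_configsI; first exact/admissible_del/kink_configs_admissible/Kc.
by rewrite charge_del // (kink_configs_charge Kc).
Qed.

Lemma kink_configs0_empty : kink_configs 0 (fset0, fset0).
Proof. by apply: kink_configsI; [split => y /=; rewrite in_fset0 | rewrite /charge]. Qed.

Lemma mem_fset_1B (A : {fset int}) y : (y \in [fset (1 - x)%R | x in A]%fset) = (1 - y \in A).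
Proof. exact: mem_imfset_can (subrI 1) (subKr 1). Qed.

Lemma mem_fset_subr1 (A : {fset int}) y : (y \in [fset (x - 1)%R | x in A]%fset) = (y + 1 \in A).
Proof. exact: mem_imfset_can (addIr (-1)) (addrK 1). Qed.

Lemma mem_fset_addr1 (A : {fset int}) y : (y \in [fset (x + 1)%R | x in A]%fset) = (y - 1 \in A).
Proof. exact: mem_imfset_can (addIr 1) (subrK 1). Qed.

Definition mirror (c : config) : config :=
  ([fset (1 - x)%R | x in c.2]%fset, [fset (1 - x)%R | x in c.1]%fset).

Lemma mirrorK : involutive mirror.
Proof.
by case=> A B; rewrite /mirror; congr pair; apply/fsetP => y; rewrite !mem_fset_1B subKr.
Qed.

Lemma flipped_mirror x c : flipped x (mirror c) = flipped (1 - x) c.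
Proof.
rewrite /flipped /mirror /= !mem_fset_1B.
have -> : (1 - x <= 0) = ~~ (x <= 0) by lia.
by case: (x <= 0).
Qed.

Lemma admissible_mirror c : admissible c -> admissible (mirror c).
Proof.
case: c => A B [h1 h2]; split => /= y; rewrite mem_fset_1B.
- by move/h2; lia.
- by move/h1; lia.
Qed.

(* [x |-> 1 - x] raises [|x|] by one on flipped sites [x <= 0] and lowers it by
   one on flipped sites [x >= 1]. *)
Lemma config_deg_mirror c : admissible c ->
  (config_deg (mirror c) + #|` c.2|)%N = (config_deg c + #|` c.1|)%N.
Proof.
case: c => A B [h1 h2]; rewrite /config_deg /mirror /= !big_imfset /=;
  try by move=> ? ? _ _; exact: subrI.
have hB : (\sum_(b <- B) `|(1 - b)%R| + #|` B| = \sum_(b <- B) `|b|)%N.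
  rewrite card_fset_sum1 -big_split /=; apply: eq_big_seq => b hb.
  by have := h2 b hb; lia.
have hA : (\sum_(a <- A) `|(1 - a)%R| = \sum_(a <- A) `|a| + #|` A|)%N.
  rewrite card_fset_sum1 -big_split /=; apply: eq_big_seq => a ha.
  by have := h1 a ha; lia.
rewrite -hB hA.
move: (\sum_(a <- A) `|a|)%N (\sum_(b <- B) `|(1 - b)%R|)%N #|` A| #|` B| => ? ? ? ?; lia.
Qed.

Lemma charge_mirror c : charge (mirror c) = - charge c.
Proof. by rewrite /charge /mirror !(card_imfset _ _ (subrI 1)) opprB. Qed.

Lemma kink_configs0_mirror c : kink_configs 0 c -> kink_configs 0 (mirror c).
Proof.
move=> Kc; apply: kink_configsI; first exact/admissible_mirror/(kink_configs_admissible Kc).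
by rewrite charge_mirror (kink_configs_charge Kc).
Qed.

Lemma config_deg_mirror0 c : kink_configs 0 c -> config_deg (mirror c) = config_deg c.
Proof.
move=> Kc; have := config_deg_mirror (kink_configs_admissible Kc).
by have := kink_configs_charge Kc; rewrite /charge; lia.
Qed.

(* Shifting all flipped sites one step to the left, the site 1 crossing the
   kink, lowers the charge by one; [kink_unshift] is the inverse move. *)
Definition kink_shift (c : config) : config :=
  (if 1 \in c.2 then [fset (a - 1)%R | a in c.1]%fset
   else (0 |` [fset (a - 1)%R | a in c.1])%fset,
   [fset (b - 1)%R | b in (c.2 `\ 1)%fset]%fset).

Definition kink_unshift (c : config) : config :=
  ([fset (a + 1)%R | a in (c.1 `\ 0)%fset]%fset,
   if 0 \in c.1 then [fset (b + 1)%R | b in c.2]%fset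
   else (1 |` [fset (b + 1)%R | b in c.2])%fset).

Lemma admissible_kink_shift c : admissible c -> admissible (kink_shift c).
Proof.
case: c => A B [h1 h2]; rewrite /kink_shift /=; split => /= y.
- case: (1 \in B); rewrite ?in_fset1U mem_fset_subr1; first by move/h1; lia.
  by case/orP => [/eqP -> //| /h1]; lia.
- by rewrite mem_fset_subr1 in_fsetD1 => /andP[y1 /h2]; move: y1; lia.
Qed.

Lemma admissible_kink_unshift c : admissible c -> admissible (kink_unshift c).
Proof.
case: c => A B [h1 h2]; rewrite /kink_unshift /=; split => /= y.
- by rewrite mem_fset_addr1 in_fsetD1 => /andP[y1 /h1]; move: y1; lia.
- case: (0 \in A); rewrite ?in_fset1U mem_fset_addr1; first by move/h2; lia.
  by case/orP => [/eqP -> //| /h2]; lia.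
Qed.

Lemma kink_shiftK c : admissible c -> kink_shift (kink_unshift c) = c.
Proof.
case: c => A B [h1 h2]; rewrite /kink_shift /kink_unshift /=.
have B0 : (0 \in B) = false by apply/negP => /h2.
have -> : (1 \in (if 0 \in A then [fset (b + 1)%R | b in B] else
              1 |` [fset (b + 1)%R | b in B])%fset) = (0 \notin A).
  by case: (0 \in A); rewrite ?in_fset1U mem_fset_addr1 subrr ?B0 ?eqxx.
congr pair; apply/fsetP => y.
- case hA: (0 \in A) => /=; rewrite ?in_fset1U mem_fset_subr1 mem_fset_addr1 in_fsetD1 addrK.
    by have [->|y0] := eqVneq y 0; rewrite ?hA //= (negbTE y0).
  by have [->|y0] := eqVneq y 0; rewrite ?hA.
- have e : (y + 1 == 1) = (y == 0) by apply/eqP/eqP; lia.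
  by case: (0 \in A); rewrite mem_fset_subr1 in_fsetD1 ?in_fset1U mem_fset_addr1 addrK e;
    have [->|y0] := eqVneq y 0; rewrite ?B0.
Qed.

Lemma kink_unshiftK c : admissible c -> kink_unshift (kink_shift c) = c.
Proof.
case: c => A B [h1 h2]; rewrite /kink_shift /kink_unshift /=.
have A1 : (1 \in A) = false by apply/negP => /h1.
have -> : (0 \in (if 1 \in B then [fset (a - 1)%R | a in A] else
              0 |` [fset (a - 1)%R | a in A])%fset) = (1 \notin B).
  by case: (1 \in B); rewrite ?in_fset1U mem_fset_subr1 add0r ?A1 ?eqxx.
congr pair; apply/fsetP => y.
- have e : (y - 1 == 0) = (y == 1) by apply/eqP/eqP; lia.
  by case: (1 \in B); rewrite mem_fset_addr1 in_fsetD1 ?in_fset1U mem_fset_subr1 subrK e;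
    have [->|y0] := eqVneq y 1; rewrite ?A1.
- case hB: (1 \in B) => /=; rewrite ?in_fset1U mem_fset_addr1 mem_fset_subr1 in_fsetD1 subrK.
    by have [->|y0] := eqVneq y 1; rewrite ?hB //= (negbTE y0).
  by have [->|y0] := eqVneq y 1; rewrite ?hB.
Qed.

Lemma charge_kink_shift c : admissible c -> charge (kink_shift c) = charge c - 1.
Proof.
case: c => A B [h1 h2]; rewrite /charge /kink_shift /=.
have A0 : (0 \in [fset (a - 1)%R | a in A]%fset) = false.
  by rewrite mem_fset_subr1 add0r; apply/negP => /h1.
have := cardfsD1 1 B; rewrite !(card_imfset _ _ (addIr (-1))).
case: (1 \in B); rewrite ?cardfsU1 ?A0 (card_imfset _ _ (addIr (-1))) /=;
  by move: #|` A| #|` B| #|` (B `\ 1)%fset| => a b d; lia.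
Qed.

Lemma config_deg_kink_shift c : admissible c ->
  (config_deg (kink_shift c) + #|` c.2|)%N = (config_deg c + #|` c.1|)%N.
Proof.
case: c => A B [h1 h2]; rewrite /config_deg /kink_shift /=.
have A0 : (0 \in [fset (a - 1)%R | a in A]%fset) = false.
  by rewrite mem_fset_subr1 add0r; apply/negP => /h1.
have hA : (\sum_(a <- [fset (a - 1)%R | a in A]%fset) `|a| = \sum_(a <- A) `|a| + #|` A|)%N.
  rewrite big_imfset /=; last by move=> ? ? _ _; exact: addIr.
  rewrite card_fset_sum1 -big_split /=; apply: eq_big_seq => a ha.
  by have := h1 a ha; lia.
have hB : (\sum_(b <- [fset (b - 1)%R | b in (B `\ (1:int))%fset]%fset) `|b| + #|` (B `\ (1:int))%fset| =
           \sum_(b <- (B `\ (1:int))%fset) `|b|)%N.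
  rewrite big_imfset /=; last by move=> ? ? _ _; exact: addIr.
  rewrite card_fset_sum1 -big_split /=; apply: eq_big_seq => b.
  by rewrite in_fsetD1 => /andP[b1 /h2]; move: b1; lia.
have hB1 : (\sum_(b <- B) `|b| = ((1:int) \in B) + \sum_(b <- (B `\ (1:int))%fset) `|b|)%N.
  case h1B: (1 \in B); first by rewrite (big_fsetD1 (1:int)).
  rewrite [in LHS](_ : B = (B `\ (1:int))%fset) //.
  by apply/fsetP => b; rewrite in_fsetD1; case: eqP => // ->; rewrite h1B.
have hc := cardfsD1 (1:int) B.
have -> : (\sum_(y <- (if (1:int) \in B then [fset (a - 1)%R | a in A]%fset
                     else ((0:int) |` [fset (a - 1)%R | a in A])%fset)) `|y|
          = \sum_(a <- [fset (a - 1)%R | a in A]%fset) `|a|)%N.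
  by case: ((1:int) \in B); rewrite ?big_fsetU1 ?A0.
rewrite hA hB1 -hB hc.
move: (\sum_(a <- A) `|a|)%N (\sum_(b <- [fset (b - 1)%R | b in (B `\ (1:int))%fset]%fset) `|b|)%N #|` A| #|` (B `\ (1:int))%fset| ((1:int) \in B).
by move=> ? ? ? ? [|]; lia.
Qed.

Definition box (N : nat) : set config :=
  [set c | (forall a, a \in c.1 -> - (N%:Z) <= a <= 0) /\
           (forall b, b \in c.2 -> 0 < b <= N%:Z)].

Lemma box_del N x c : box N c -> box N (del_flip x c).
Proof.
case: c => A B [h1 h2]; rewrite /del_flip; case: ifP => _; split => /= y.
- by case/fsetD1P => _; apply: h1.
- exact: h2.
- exact: h1.
- by case/fsetD1P => _; apply: h2.
Qed.

Lemma box_add N x c : (absz x <= N)%N -> box N c -> box N (add_flip x c).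
Proof.
move=> hx; case: c => A B [h1 h2]; rewrite /add_flip; case: ifP => hx0; split => /= y.
- by case/fset1UP => [->|/h1] //; apply/andP; split => //; lia.
- exact: h2.
- exact: h1.
- by case/fset1UP => [->|/h2] //; apply/andP; split; lia.
Qed.

Lemma box0_unflipped0 c : box 0 c -> ~~ flipped 0 c -> c = (fset0, fset0).
Proof.
case: c => A B [h1 h2]; rewrite /flipped /= => h0; congr pair.
- apply/fsetP => y; rewrite in_fset0; apply/negbTE/negP => yA.
  have y0 : y = 0 by have := h1 _ yA; lia.
  by rewrite -y0 yA in h0.
- by apply/fsetP => y; rewrite in_fset0; apply/negbTE/negP => /h2; lia.
Qed.

Lemma finite_sub_box (F : set config) n : finite_set F ->
  (F `<=` kink_configs n)%classic -> exists N, (F `<=` box N)%classic.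
Proof.
move=> finF FK.
pose mx (c : config) := (\max_(s <- (c.1 `|` c.2)%fset) absz s)%N.
exists (\max_(c <- fset_set F) mx c)%N => c Fc.
have hc : (mx c <= \max_(c <- fset_set F) mx c)%N.
  by apply: leq_bigmax_seq => //; rewrite in_fset_set // inE.
move: hc; set M := (\max_(_ <- _) _)%N => hc.
have [h1 [h2 _]] := FK c Fc.
split => [a ha | b hb].
- have : (absz a <= mx c)%N by apply: leq_bigmax_seq => //; rewrite in_fsetU ha.
  by have := h1 a ha; lia.
- have : (absz b <= mx c)%N by apply: leq_bigmax_seq => //; rewrite in_fsetU hb orbT.
  by have := h2 b hb; lia.
Qed.

Section kink_weights.
Variables (R : realType) (q : R).
Local Notation p := (q ^+ 2).

Let p_ge0 : 0 <= p. Proof. exact: sqr_ge0. Qed.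

Definition sqweight (c : config) : \bar R := ((weight q c) ^+ 2)%:E.

Lemma sqweight_ge0 c : (0 <= sqweight c)%E.
Proof. by rewrite lee_fin sqr_ge0. Qed.

Lemma sqweight_empty : sqweight (fset0, fset0) = 1%E.
Proof. by rewrite /sqweight /weight /= !big_seq_fset0 expr0 expr1n. Qed.

Lemma sqweight_add x c : ~~ flipped x c ->
  sqweight (add_flip x c) = ((p ^+ absz x)%:E * sqweight c)%E.
Proof.
move=> h; rewrite /sqweight /weight -/(config_deg _) config_deg_add // -EFinM.
by rewrite exprD exprMn -!exprM mulnC.
Qed.

Lemma esum_flipped x (P P' : set config) :
  (forall c, P c -> flipped x c -> P' (del_flip x c)) ->
  (forall c, P' c -> ~~ flipped x c -> P (add_flip x c)) ->
  esum (P `&` [set c | flipped x c])%classic sqweight =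
  ((p ^+ absz x)%:E * esum (P' `&` [set c | ~~ flipped x c])%classic sqweight)%E.
Proof.
move=> PP' P'P.
have -> : (P `&` [set c | flipped x c] =
           add_flip x @` (P' `&` [set c | ~~ flipped x c]))%classic.
  apply/seteqP; split => c /=.
  - case=> Pc hc; exists (del_flip x c); last exact: add_delK.
    by split; [exact: PP' | exact: flipped_del].
  - by case=> d [P'd hd] <-; split; [exact: P'P | exact: flipped_add].
rewrite esum_image; last first.
  by move=> a b; rewrite !inE => -[_ ha] [_ hb] e; rewrite -(del_addK ha) e del_addK.
rewrite -ge0_esumZl; [|exact: exprn_ge0|exact: sqweight_ge0].
by apply: eq_esum => c [_ hc]; exact: sqweight_add.
Qed.

Lemma esum_kink_flipped x n (Q : set config) :
  (forall c, ~~ flipped x c -> Q (add_flip x c) <-> Q c) ->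
  esum (kink_configs n `&` Q `&` [set c | flipped x c])%classic sqweight =
  ((p ^+ absz x)%:E * esum (kink_configs (n - flip_charge x) `&` Q
                              `&` [set c | ~~ flipped x c])%classic sqweight)%E.
Proof.
move=> hQ; apply: esum_flipped => c [Kc Qc] hc.
- split; first exact: kink_configs_del.
  by apply/(hQ _ (flipped_del x c)); rewrite add_delK.
- split; first by have := kink_configs_add Kc hc; rewrite subrK.
  exact/hQ.
Qed.

Lemma esum_split_flipped (S : set config) x :
  esum S sqweight = (esum (S `&` [set c | flipped x c])%classic sqweight +
                     esum (S `&` [set c | ~~ flipped x c])%classic sqweight)%E.
Proof.
rewrite (esumID [set c | flipped x c]); last by move=> c _; exact: sqweight_ge0.
by congr (_ + esum (_ `&` _) _)%E; apply/seteqP; split => c /=; case: (flipped x c).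
Qed.

Lemma esum_flip_factor (S : set config) x :
  (forall c, S c -> flipped x c -> S (del_flip x c)) ->
  (forall c, S c -> ~~ flipped x c -> S (add_flip x c)) ->
  esum S sqweight =
  ((1 + p ^+ absz x)%:E * esum (S `&` [set c | ~~ flipped x c])%classic sqweight)%E.
Proof.
move=> h1 h2; rewrite (esum_split_flipped S x) (esum_flipped h1 h2) EFinD.
by rewrite addeC ge0_muleDl ?mul1e // lee_fin exprn_ge0.
Qed.

Lemma esum_box0 : (esum (box 0) sqweight <= (1 + 1)%:E)%E.
Proof.
rewrite (@esum_flip_factor _ 0); last 2 first.
- by move=> c Bc _; exact: box_del.
- by move=> c Bc _; exact: box_add.
rewrite expr0 -[leRHS]mule1; apply: lee_pmul => //.
  by apply: esum_ge0 => c _; exact: sqweight_ge0.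
apply: le_trans (@subset_le_esum _ _ _ [set (fset0, fset0)] _ _) _.
  by move=> c [Bc hc] /=; exact: box0_unflipped0.
rewrite esum_set1; last exact: sqweight_ge0.
by have := sqweight_empty; rewrite /sqweight => ->.
Qed.

(* Enlarging the box adds the two sites [-(N+1)] and [N+1]. *)
Lemma esum_box_step N :
  (esum (box N.+1) sqweight <=
     ((1 + p ^+ N.+1)%:E * ((1 + p ^+ N.+1)%:E * esum (box N) sqweight)))%E.
Proof.
set x1 : int := - (N.+1%:Z); set x2 : int := N.+1%:Z.
have a1 : absz x1 = N.+1 by rewrite /x1; lia.
have x12 : x2 != x1 by rewrite /x1 /x2; apply/eqP; lia.
rewrite (@esum_flip_factor _ x1); last 2 first.
- by move=> c Bc _; exact: box_del.
- by move=> c Bc _; apply: box_add => //; rewrite a1.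
rewrite (@esum_flip_factor (box N.+1 `&` _) x2); last 2 first.
- move=> c [Bc h1] _; split; first exact: box_del.
  by rewrite /= flipped_del_neq // eq_sym.
- move=> c [Bc h1] _; split; first exact: box_add.
  by rewrite /= flipped_add_neq // eq_sym.
have le1p : (0 <= (1 + p ^+ N.+1)%:E)%E by rewrite lee_fin addr_ge0 // exprn_ge0.
rewrite a1; apply: lee_wpmul2l => //; apply: lee_wpmul2l => //.
apply: subset_le_esum => -[A B] [[[h1 h2] n1] n2] /=.
move: n1 n2; rewrite /flipped /x1 /x2 /= => n1 n2; split => y hy.
- have yn : y != - (N.+1%:Z) by apply: contraNneq n1 => <-.
  by have := h1 y hy; lia.
- have yn : y != N.+1%:Z by apply: contraNneq n2 => <-.
  by have := h2 y hy; lia.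
Qed.

Lemma esum_box_bound N :
  (esum (box N) sqweight <= (2 * expR (2 * \sum_(j < N) p ^+ j.+1))%:E)%E.
Proof.
elim: N => [|N IH].
  by rewrite big_ord0 mulr0 expR0 mulr1; exact: esum_box0.
apply: le_trans (esum_box_step N) _.
set t := p ^+ N.+1; have t0 : 0 <= t by rewrite exprn_ge0.
have t1 : (0 <= (1 + t)%:E)%E by rewrite lee_fin addr_ge0.
apply: le_trans (lee_wpmul2l t1 (lee_wpmul2l t1 IH)) _.
rewrite -!EFinM lee_fin big_ord_recr /= -/t mulrDr expRD.
have -> : expR (2 * t) = expR t * expR t by rewrite mulrDl mul1r expRD.
have h : (1 + t) * (1 + t) <= expR t * expR t by rewrite ler_pM ?addr_ge0 ?expR_ge1Dx.
set e := expR (2 * _).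
rewrite [leLHS]mulrA [leLHS]mulrC [leRHS]mulrA ler_wpM2l //.
by apply/ltW/mulr_gt0; rewrite ?expR_gt0.
Qed.

Hypothesis q2_lt1 : p < 1.

Lemma esum_kink_bound n :
  (esum (kink_configs n) sqweight <= (2 * expR (2 * (p / (1 - p))))%:E)%E.
Proof.
apply: ge_ereal_sup => _ [F [finF FK] <-].
have [N FN] := finite_sub_box finF FK.
apply: (@le_trans _ _ (esum (box N) sqweight)).
  by apply: ereal_sup_ubound; exists F.
apply: le_trans (esum_box_bound N) _.
by rewrite lee_fin ler_pM2l // ler_expR ler_pM2l // geom_sum_le // p_ge0.
Qed.

Lemma esum_kink_fin_num n (S : set config) :
  (S `<=` kink_configs n)%classic -> esum S sqweight \is a fin_num.
Proof.
move=> hS; rewrite ge0_fin_numE; last by apply: esum_ge0 => c _; exact: sqweight_ge0.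
apply: le_lt_trans (subset_le_esum _ hS) _.
exact: le_lt_trans (esum_kink_bound n) (ltry _).
Qed.


Lemma esum_flipped_mirror x :
  esum (kink_configs 0 `&` [set c | flipped x c])%classic sqweight =
  esum (kink_configs 0 `&` [set c | flipped (1 - x) c])%classic sqweight.
Proof.
rewrite (reindex_esum (kink_configs 0 `&` [set c | flipped (1 - x) c])%classic
                      (kink_configs 0 `&` [set c | flipped x c])%classic mirror).
  apply: eq_esum => c [Kc _].
  by rewrite /sqweight /weight -/(config_deg (mirror c)) config_deg_mirror0.
split.
- by move=> c [Kc hc]; split; [exact: kink_configs0_mirror | rewrite /= flipped_mirror].
- by move=> a b _ _ e; rewrite -(mirrorK a) e mirrorK.
- move=> c [Kc hc]; exists (mirror c); last exact: mirrorK.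
  by split; [exact: kink_configs0_mirror | rewrite /= flipped_mirror subKr].
Qed.

Lemma esum_kink_shift (j : nat) :
  esum (kink_configs (- (j%:Z) - 1)) sqweight =
  ((p ^+ j)%:E * esum (kink_configs (- (j%:Z))) sqweight)%E.
Proof.
rewrite (reindex_esum (kink_configs (- (j%:Z))) (kink_configs (- (j%:Z) - 1)) kink_shift).
  rewrite -ge0_esumZl; [|exact: exprn_ge0|exact: sqweight_ge0].
  apply: eq_esum => c Kc.
  have := config_deg_kink_shift (kink_configs_admissible Kc).
  have := kink_configs_charge Kc; rewrite /charge => hc hd.
  rewrite /sqweight /weight -/(config_deg (kink_shift c)) -/(config_deg c).
  have -> : config_deg (kink_shift c) = (j + config_deg c)%N.
    by move: hc hd; move: (config_deg _) (config_deg c) #|` c.1| #|` c.2| => ? ? ? ?; lia.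
  by rewrite -EFinM exprD exprMn -!exprM mulnC.
split.
- move=> c Kc; have ac := kink_configs_admissible Kc.
  apply: kink_configsI; first exact: admissible_kink_shift.
  by rewrite charge_kink_shift // (kink_configs_charge Kc).
- move=> a b; rewrite !inE => Ka Kb e.
  rewrite -(kink_unshiftK (kink_configs_admissible Ka)) e.
  exact/kink_unshiftK/(kink_configs_admissible Kb).
- move=> c Kc; have ac := kink_configs_admissible Kc.
  exists (kink_unshift c); last exact: kink_shiftK.
  have au := admissible_kink_unshift ac.
  apply: kink_configsI => //; have := charge_kink_shift au.
  by rewrite kink_shiftK // (kink_configs_charge Kc); lia.
Qed.

(* [fine] sends [+oo] to [0], but every set of configurations weighed below lies
   in some [kink_configs n] and so has finite mass by [esum_kink_fin_num]. *)
Definition mass (S : set config) : R := fine (esum S sqweight).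

Definition partition_fn (n : int) : R := mass (kink_configs n).

Definition flip_mass (n x : int) : R :=
  mass (kink_configs n `&` [set c | flipped x c])%classic.

Lemma mass_ge0 S : 0 <= mass S.
Proof. by apply/fine_ge0/esum_ge0 => c _; exact: sqweight_ge0. Qed.

Lemma mass_split n (S : set config) x : (S `<=` kink_configs n)%classic ->
  mass S = mass (S `&` [set c | flipped x c])%classic +
           mass (S `&` [set c | ~~ flipped x c])%classic.
Proof.
move=> hS; rewrite /mass (esum_split_flipped S x) fineD //;
  apply: (esum_kink_fin_num (n := n)); exact: subset_trans (@subIsetl _ _ _) hS.
Qed.

Lemma le_mass n (S S' : set config) : (S `<=` S')%classic ->
  (S' `<=` kink_configs n)%classic -> mass S <= mass S'.
Proof.
move=> SS' hS'; apply: fine_le; [|exact: esum_kink_fin_num hS' | exact: subset_le_esum].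
exact: esum_kink_fin_num (subset_trans SS' hS').
Qed.

Lemma mass_kink_flipped x n (Q : set config) :
  (forall c, ~~ flipped x c -> Q (add_flip x c) <-> Q c) ->
  mass (kink_configs n `&` Q `&` [set c | flipped x c])%classic =
  p ^+ absz x * mass (kink_configs (n - flip_charge x) `&` Q
                        `&` [set c | ~~ flipped x c])%classic.
Proof.
move=> hQ; rewrite /mass esum_kink_flipped // fineM //.
by apply: (esum_kink_fin_num (n := n - flip_charge x)) => c [[]].
Qed.

Lemma partition_fn_shift (j : nat) :
  partition_fn (- (j%:Z) - 1) = p ^+ j * partition_fn (- (j%:Z)).
Proof.
rewrite /partition_fn /mass esum_kink_shift fineM //.
exact: esum_kink_fin_num (@subset_refl _ _).
Qed.

Lemma partition_fn_neg (k : nat) : partition_fn (- (k%:Z)) = p ^+ 'C(k, 2) * partition_fn 0.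
Proof.
elim: k => [|k IH]; first by rewrite bin0n expr0 mul1r.
have -> : - (k.+1%:Z) = - (k%:Z) - 1 by lia.
by rewrite partition_fn_shift IH mulrA -exprD binS bin1 addnC.
Qed.

Lemma partition_fn0_gt0 : 0 < partition_fn 0.
Proof.
apply: lt_le_trans ltr01 _; rewrite /partition_fn /mass.
have -> : 1 = fine 1%E by [].
apply: fine_le => //; first exact: esum_kink_fin_num (@subset_refl _ _).
apply: esum_ge; exists [set (fset0, fset0)]%classic.
  by split; [exact: finite_set1 | move=> c /= ->; exact: kink_configs0_empty].
by rewrite fsbig_set1; have := sqweight_empty; rewrite /sqweight => ->.
Qed.

Lemma flip_mass_le_partition n x : flip_mass n x <= partition_fn n.
Proof. exact: le_mass (@subIsetl _ _ _) (@subset_refl _ _). Qed.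

Lemma flip_mass_mirror x : flip_mass 0 x = flip_mass 0 (1 - x).
Proof. by rewrite /flip_mass /mass esum_flipped_mirror. Qed.

Lemma flipped_add_neq_iff x y : y != x -> forall c, ~~ flipped x c ->
  [set c | flipped y c]%classic (add_flip x c) <-> [set c | flipped y c]%classic c.
Proof. by move=> yx c hc /=; rewrite flipped_add_neq. Qed.

Lemma unflipped_add_neq_iff x y : y != x -> forall c, ~~ flipped x c ->
  [set c | ~~ flipped y c]%classic (add_flip x c) <-> [set c | ~~ flipped y c]%classic c.
Proof. by move=> yx c hc /=; rewrite flipped_add_neq. Qed.

Lemma flip_charge_gt0 x : 0 < x -> flip_charge x = 1.
Proof. by rewrite /flip_charge ltNge => /negbTE ->. Qed.

Lemma flip_charge_le0 x : x <= 0 -> flip_charge x = -1.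
Proof. by rewrite /flip_charge => ->. Qed.

Lemma flip_mass_rec n x : 0 < x ->
  flip_mass n x = p ^+ absz x * (partition_fn (n - 1) - flip_mass (n - 1) x).
Proof.
move=> x0; rewrite /flip_mass -[kink_configs n]setIT.
rewrite (@mass_kink_flipped x n setT) // setIT flip_charge_gt0 //.
by congr (_ * _); rewrite /partition_fn (@mass_split (n - 1) (kink_configs (n - 1)) x) //; lra.
Qed.

Lemma flip_mass_iter x (N : nat) : 0 < x ->
  flip_mass 0 x =
    \sum_(k < N) (-1) ^+ k * p ^+ (k.+1 * absz x)%N * partition_fn (- (k.+1%:Z))
    + (-1) ^+ N * p ^+ (N * absz x)%N * flip_mass (- (N%:Z)) x.
Proof.
move=> x0; elim: N => [|N IH]; first by rewrite big_ord0 add0r mul0n !expr0 !mul1r.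
rewrite big_ord_recr /= IH (flip_mass_rec _ x0) -addrA.
have -> : - (N%:Z) - 1 = - (N.+1%:Z) by lia.
congr (_ + _); rewrite mulSn exprD [(-1) ^+ N.+1]exprS.
set a := (-1) ^+ N; set P := p ^+ (N * _)%N; set r := p ^+ _.
lra.
Qed.

Definition theta_term (m k : nat) : R := (-1) ^+ k * q ^+ (k * (k + 2 * m + 1))%N.

Lemma theta_termE m k :
  q ^+ (2 * m)%N * theta_term m k = (-1) ^+ k * p ^+ (k.+1 * m)%N * p ^+ 'C(k.+1, 2).
Proof.
rewrite /theta_term mulrCA -mulrA; congr (_ * _).
rewrite -!exprM -!exprD; congr (_ ^+ _).
have : (2 * 'C(k.+1, 2) = k.+1 * k)%N.
  by elim: k => [|k IH] //; rewrite binS bin1 mulnDr IH; lia.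
lia.
Qed.

Lemma flip_mass_tail_le x (N : nat) : 0 < x ->
  `|(-1) ^+ N * p ^+ (N * absz x)%N * flip_mass (- (N%:Z)) x| <= p ^+ N * partition_fn 0.
Proof.
move=> x0; rewrite normrM normrM normrX normrN normr1 expr1n mul1r.
rewrite (ger0_norm (exprn_ge0 _ p_ge0)) (ger0_norm (mass_ge0 _)).
apply: le_trans (ler_wpM2l (exprn_ge0 _ p_ge0) (flip_mass_le_partition _ _)) _.
rewrite partition_fn_neg mulrA -exprD ler_wpM2r ?mass_ge0 //.
by apply: ler_wiXn2l; [exact: p_ge0 | exact: ltW | nia].
Qed.

Lemma theta_partial_sum_error x (N : nat) : 0 < x ->
  `|flip_mass 0 x / partition_fn 0
      - q ^+ (2 * absz x)%N * series (theta_term (absz x)) N| <= p ^+ N.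
Proof.
move=> x0; have Z0 := partition_fn0_gt0.
rewrite (flip_mass_iter N x0).
have -> : \sum_(k < N) (-1) ^+ k * p ^+ (k.+1 * absz x)%N * partition_fn (- (k.+1%:Z)) =
          q ^+ (2 * absz x)%N * series (theta_term (absz x)) N * partition_fn 0.
  rewrite /series /= big_mkord mulr_sumr mulr_suml; apply: eq_bigr => k _.
  by rewrite theta_termE partition_fn_neg mulrA.
rewrite mulrDl mulfK ?lt0r_neq0 // addrAC subrr add0r.
by rewrite normrM normfV (gtr0_norm Z0) ler_pdivrMr // flip_mass_tail_le.
Qed.

Lemma theta_partial_sums_cvg x : 0 < x ->
  (q ^+ (2 * absz x)%N * series (theta_term (absz x)) N @[N --> \oo] -->
     flip_mass 0 x / partition_fn 0)%classic.
Proof.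
move=> x0; apply: (@cvg_geometric_rate _ _ _ p 1); rewrite ?p_ge0 //.
by move=> N; rewrite mul1r theta_partial_sum_error.
Qed.

(* Configurations flipped at exactly one of the sites [x], [x + 1] correspond
   to each other by removing that flip, at the costs [p ^+ x >= p ^+ (x + 1)]. *)
Lemma flip_mass_decr x : 0 < x -> flip_mass 0 (x + 1) <= flip_mass 0 x.
Proof.
move=> x0; have x1x : x + 1 != x by apply/eqP; lia.
have xx1 : x != x + 1 by rewrite eq_sym.
set K0 := kink_configs 0.
rewrite /flip_mass (@mass_split 0 _ x) ?subIsetl //.
rewrite [leRHS](@mass_split 0 _ (x + 1)) ?subIsetl //.
rewrite (setIAC K0 [set c | flipped (x + 1) c]%classic)
        (setIAC K0 [set c | flipped (x + 1) c]%classic [set c | ~~ flipped x c]%classic)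
        (setIAC K0 [set c | flipped x c]%classic [set c | ~~ flipped (x + 1) c]%classic).
rewrite (mass_kink_flipped 0 (unflipped_add_neq_iff xx1)).
rewrite (mass_kink_flipped 0 (unflipped_add_neq_iff x1x)).
rewrite !flip_charge_gt0 ?addr_gt0 //.
rewrite (setIAC (kink_configs (0 - 1)) [set c | ~~ flipped x c]%classic).
apply: lerD => //; apply: ler_wpM2r; first exact: mass_ge0.
by apply: ler_wiXn2l; [exact: p_ge0 | exact: ltW | lia].
Qed.

Lemma flip_mass_le_pow x : 0 < x -> flip_mass 0 x <= p ^+ absz x * partition_fn 0.
Proof.
move=> x0; rewrite flip_mass_rec // ler_wpM2l ?(exprn_ge0 _ p_ge0) //.
have := partition_fn_shift 0; rewrite expr0 mul1r oppr0 => <-.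
by rewrite lerBlDl lerDr mass_ge0.
Qed.

(* Removing both flips at the sites [0] and [1] keeps the charge and costs [p <= 1]. *)
Lemma mass_flipped01_le :
  mass (kink_configs 0 `&` [set c | flipped 0 c] `&` [set c | flipped 1 c])%classic <=
  mass (kink_configs 0 `&` [set c | ~~ flipped 0 c] `&` [set c | ~~ flipped 1 c])%classic.
Proof.
rewrite (mass_kink_flipped 0 (flipped_add_neq_iff (isT : (0 : int) != 1))).
rewrite setIAC (mass_kink_flipped _ (unflipped_add_neq_iff (isT : (1 : int) != 0))).
rewrite flip_charge_gt0 // flip_charge_le0 // subrr expr0 mul1r setIAC.
by rewrite ler_piMl ?mass_ge0 // expr1 ltW.
Qed.

Lemma flip_mass01_le : flip_mass 0 0 + flip_mass 0 1 <= partition_fn 0.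
Proof.
set K0 := kink_configs 0.
rewrite /partition_fn (@mass_split 0 K0 0) //.
rewrite [mass (K0 `&` [set c | ~~ flipped 0 c])%classic](@mass_split 0 _ 1) ?subIsetl //.
rewrite /flip_mass (@mass_split 0 (K0 `&` [set c | flipped 1 c])%classic 0) ?subIsetl //.
rewrite (setIAC K0 [set c | flipped 1 c]%classic).
rewrite (setIAC K0 [set c | flipped 1 c]%classic [set c | ~~ flipped 0 c]%classic).
have := mass_flipped01_le; rewrite -/K0; lra.
Qed.

Lemma kink_expectE x :
  kink_expect q 0 x = (if x <= 0 then partition_fn 0 - flip_mass 0 x else flip_mass 0 x)
                        / partition_fn 0 - 2^-1.
Proof.
have Z0 := lt0r_neq0 partition_fn0_gt0.
have eS := @mass_split 0 (kink_configs 0) x (@subset_refl _ _).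
have massE S : fine (esum S (fun c => (weight q c ^+ 2)%:E)) = mass S by [].
rewrite /kink_expect !massE -/(partition_fn 0).
have -> : [set c | spin_up x c]%classic =
          [set c | if x <= 0 then ~~ flipped x c else flipped x c]%classic.
  by apply/seteqP; split => c /=; rewrite /spin_up /flipped; case: (x <= 0).
have -> : [set c | ~~ spin_up x c]%classic =
          [set c | if x <= 0 then flipped x c else ~~ flipped x c]%classic.
  by apply/seteqP; split => c /=; rewrite /spin_up /flipped; case: (x <= 0) => //; rewrite negbK.
apply: (mulIf Z0); rewrite !mulrBl !divfK //.
by case: (x <= 0); rewrite /flip_mass /partition_fn eS; lra.
Qed.

Lemma kink_expect_gt0 x : 0 < x ->
  kink_expect q 0 x = flip_mass 0 x / partition_fn 0 - 2^-1.
Proof. by move=> x0; rewrite kink_expectE ifN // -ltNge. Qed.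

Lemma kink_expect_le0 x : x <= 0 ->
  kink_expect q 0 x = 2^-1 - flip_mass 0 x / partition_fn 0.
Proof.
move=> x0; rewrite kink_expectE x0 mulrBl divff ?lt0r_neq0 ?partition_fn0_gt0 //; lra.
Qed.

Lemma kink_expect_mirror x : x <= 0 -> kink_expect q 0 x = - kink_expect q 0 (1 - x).
Proof.
move=> x0; rewrite kink_expect_le0 // kink_expect_gt0; last by lia.
by rewrite -flip_mass_mirror; lra.
Qed.

Lemma kink_expect_theta x : q != 0 -> 0 < x ->
  kink_expect q 0 x =
    - 2^-1 + q ^+ (2 * absz x)%N * limn (series (theta_term (absz x))).
Proof.
move=> q0 x0; set Q := q ^+ (2 * absz x)%N.
have Q0 : Q != 0 by rewrite expf_neq0.
have /(@cvgMr _ _ _ _ _ Q^-1) : (Q * series (theta_term (absz x)) N @[N --> \oo] -->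
                       flip_mass 0 x / partition_fn 0)%classic.
  exact: theta_partial_sums_cvg.
have -> : (fun N => Q^-1 * (Q * series (theta_term (absz x)) N)) =
          series (theta_term (absz x)) by apply/funext => N; rewrite mulKf.
by move=> /cvg_lim -> //; rewrite kink_expect_gt0 // mulVKf //; lra.
Qed.

Lemma kink_drop_gt0 a : 0 < a ->
  0 <= kink_expect q 0 a - kink_expect q 0 (a + 1) <= p ^+ absz a.
Proof.
move=> a0; rewrite kink_expect_gt0 // kink_expect_gt0; last by lia.
have Z0 := partition_fn0_gt0.
have := flip_mass_decr a0; have := flip_mass_le_pow a0; have := mass_ge0
  (kink_configs 0 `&` [set c | flipped (a + 1) c])%classic; rewrite -/(flip_mass 0 (a + 1)).
set H0 := flip_mass 0 a; set H1 := flip_mass 0 (a + 1); move=> g b d.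
have -> : H0 / partition_fn 0 - 2^-1 - (H1 / partition_fn 0 - 2^-1) =
          (H0 - H1) / partition_fn 0 by rewrite mulrBl; lra.
apply/andP; split; first by rewrite divr_ge0 ?subr_ge0 // ltW.
by rewrite ler_pdivrMr //; lra.
Qed.

Lemma kink_drop_one : 0 <= kink_expect q 0 0 - kink_expect q 0 1 <= 1.
Proof.
rewrite kink_expect_le0 // kink_expect_gt0 //.
have Z0 := partition_fn0_gt0; have := flip_mass01_le.
have := mass_ge0 (kink_configs 0 `&` [set c | flipped 0 c])%classic.
have := mass_ge0 (kink_configs 0 `&` [set c | flipped 1 c])%classic.
rewrite -/(flip_mass 0 0) -/(flip_mass 0 1).
set H0 := flip_mass 0 0; set H1 := flip_mass 0 1; move=> g1 g0 h.
have -> : 2^-1 - H0 / partition_fn 0 - (H1 / partition_fn 0 - 2^-1) =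
          (partition_fn 0 - H0 - H1) / partition_fn 0.
  by rewrite !mulrBl divff ?lt0r_neq0 //; lra.
apply/andP; split; first by apply: divr_ge0; [lra | exact: ltW].
by rewrite ler_pdivrMr // mul1r; lra.
Qed.

Lemma kink_drop_le m :
  0 <= kink_expect q 0 (m - 1) - kink_expect q 0 m <= p ^+ absz (m - 1).
Proof.
have [m2|m1] := lerP 2 m.
  by have := kink_drop_gt0 (_ : 0 < m - 1); rewrite subrK; apply; lia.
have [m0|m0] := lerP m 0; last first.
  have -> : m = 1 by lia.
  by rewrite (_ : (1 - 1 : int) = 0) // (_ : p ^+ absz 0 = 1) //; exact: kink_drop_one.
have m10 : m - 1 <= 0 by lia.
rewrite (kink_expect_mirror m10) (kink_expect_mirror m0).
have -> : 1 - (m - 1) = (1 - m) + 1 by lia.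
have -> : absz (m - 1) = absz (1 - m) by lia.
by rewrite opprK [X in 0 <= X <= _]addrC; apply: kink_drop_gt0; lia.
Qed.

End kink_weights.

Theorem lemmaA (R : realType) (q : R) (hq0 : 0 < q) (hq1 : q < 1) :
  (forall x : int, 0 < x ->
     kink_expect q 0 x =
       - 2^-1 + q ^+ (2 * absz x)%N *
         limn (series (fun k : nat => (-1) ^+ k * q ^+ (k * (k + 2 * absz x + 1))%N)))
  /\ (forall x : int, x <= 0 -> kink_expect q 0 x = - kink_expect q 0 (1 - x))
  /\ (exists C c : R, 0 < C /\ 0 < c /\
        forall m : int,
          0 <= kink_expect q 0 (m - 1) - kink_expect q 0 m
          /\ kink_expect q 0 (m - 1) - kink_expect q 0 m
               <= C * expR (- c * (`|m|%:R))).
Proof.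
have p0 : 0 < q ^+ 2 by rewrite exprn_gt0.
have p1 : q ^+ 2 < 1 by rewrite expr2; nra.
split; first by move=> x x0; rewrite (kink_expect_theta p1 (lt0r_neq0 hq0) x0).
split; first by move=> x x0; rewrite (kink_expect_mirror p1 x0).
exists (q ^+ 2)^-1, (- ln (q ^+ 2)); split; first by rewrite invr_gt0.
split; first by rewrite oppr_gt0 ln_lt0 // p0 p1.
move=> m; rewrite opprK expRM_natr lnK ?posrE //.
have /andP[drop_ge0 drop_le] := kink_drop_le p1 m; split => //.
apply: le_trans drop_le _; rewrite ler_pdivlMl // -exprS.
by apply: ler_wiXn2l; [exact: ltW | exact: ltW | lia].
Qed.
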